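(* Let $k$ and $N$ be positive integers. The inequality $$k^N \leqslant \binom{Nk-N-1}{N}$$ holds in each of the following cases: (1) $k \geqslant 5$ and $N \geqslant 3$; (2) $k \geqslant 4$ and $N \geqslant 4$; (3) $k \geqslant 3$ and $N \geqslant 9$. *)

From mathcomp Require Import all_boot.

(* Write B(k, N) = 'C(N(k-1) - 1, N).  After multiplying by N!, the ratio
   B(k+1, N) / B(k, N) is a product of N ratios of falling-factorial factors, each at
   least (k+1)/k, so k^N <= B(k, N) propagates from k to k+1.  In the other direction
   B(k, N+1) = (k-2) 'C(N(k-1) + k - 2, N), and raising the top index one step at a time
   shows that this is at least (2k-3) B(k, N) >= k B(k, N); so for k >= 3 the inequality
   propagates from N to N+1.  It remains to check the three corners
   5^3 <= 'C(11, 3), 4^4 <= 'C(11, 4) and 3^9 <= 'C(17, 9). *)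

From mathcomp Require Import all_boot.
From mathcomp Require Import zify.

Lemma ffact_addn_ratio k N a j : a <= k * N ->
  k.+1 ^ j * a ^_ j <= k ^ j * (a + N) ^_ j.
Proof.
move=> le_a_kN; elim: j => [|j IHj]; first by rewrite !ffactn0.
rewrite !ffactnSr !expnSr mulnACA [k ^ j * k * _]mulnACA.
by apply: leq_mul IHj _; nia.
Qed.

Lemma bin_addn_ratio q N m i : m < N * q.+1 ->
  (q + i) * 'C(m, N) <= q * 'C(m + i, N).
Proof.
move=> lt_m_Nq; have [lt_m_N | le_N_m] := ltnP m N; first by rewrite bin_small // muln0.
have N_gt0 : 0 < N by move: lt_m_Nq; case: (N).
elim: i => [|i IHi]; first by rewrite !addn0.
have pos : 0 < (m + i).+1 - N by lia.
rewrite -(leq_pmul2l pos) !addnS [X in _ <= X]mulnCA -mul_bin_down /=.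
rewrite [X in _ <= X]mulnCA; apply: leq_trans _ (leq_mul (leqnn _) IHi).
by rewrite !mulnA leq_mul2r; apply/orP; right; nia.
Qed.

Lemma bound_succ_k {k N} : 0 < N -> 1 < k -> k ^ N <= 'C(N * k - N - 1, N) ->
  k.+1 ^ N <= 'C(N * k.+1 - N - 1, N).
Proof.
move=> N_gt0 k_gt1 le_kN.
have -> : N * k.+1 - N - 1 = (N * k - N - 1) + N by nia.
have le_a_kN : N * k - N - 1 <= k * N by lia.
have kN_gt0 : 0 < k ^ N by rewrite expn_gt0 ltnW.
rewrite -(leq_pmul2r (fact_gt0 N)) bin_ffact -(leq_pmul2l kN_gt0) mulnCA.
apply: leq_trans _ (ffact_addn_ratio _ _ _ N le_a_kN).
by rewrite -bin_ffact; apply: leq_mul => //; apply: leq_mul.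
Qed.

Lemma bound_succ_N {k N} : 0 < N -> 1 < k ->
  (k.*2 - 3) * 'C(N * k - N - 1, N) <= 'C(N.+1 * k - N.+1 - 1, N.+1).
Proof.
move=> N_gt0 k_gt1.
have -> : N.+1 * k - N.+1 - 1 = (N * k - N - 1) + k.-1 by nia.
set M := _ + k.-1.
have top : 'C(M, N.+1) = (k - 2) * 'C(M, N).
  apply/eqP; rewrite -(eqn_pmul2l (ltn0Sn N)) mul_bin_left mulnA.
  by apply/eqP; congr (_ * _); rewrite /M; nia.
rewrite top (_ : k.*2 - 3 = k - 2 + k.-1); last by lia.
by apply: bin_addn_ratio; nia.
Qed.

Lemma bound_mono_k {k k' N} : 0 < N -> 1 < k -> k <= k' ->
  k ^ N <= 'C(N * k - N - 1, N) -> k' ^ N <= 'C(N * k' - N - 1, N).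
Proof.
move=> N_gt0 k_gt1 /subnK <- base; elim: (k' - k) => [|d IHd] //.
by rewrite addSn; apply: bound_succ_k => //; apply: leq_trans k_gt1 (leq_addl _ _).
Qed.

Lemma bound_mono_N {k N N'} : 2 < k -> 0 < N -> N <= N' ->
  k ^ N <= 'C(N * k - N - 1, N) -> k ^ N' <= 'C(N' * k - N' - 1, N').
Proof.
move=> k_gt2 N_gt0 /subnK <- base; elim: (N' - N) => [|d IHd] //.
have dN_gt0 : 0 < d + N by rewrite addn_gt0 N_gt0 orbT.
rewrite addSn expnS; apply: leq_trans _ (bound_succ_N dN_gt0 (ltnW k_gt2)).
by apply: leq_mul IHd; lia.
Qed.

Lemma bound_mono {k0 N0 k N} : 2 < k0 -> k0 <= k -> 0 < N0 -> N0 <= N ->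
  k0 ^ N0 <= 'C(N0 * k0 - N0 - 1, N0) -> k ^ N <= 'C(N * k - N - 1, N).
Proof.
move=> k0_gt2 le_k N0_gt0 le_N base.
exact: bound_mono_k (leq_trans N0_gt0 le_N) (ltnW k0_gt2) le_k
  (bound_mono_N k0_gt2 N0_gt0 le_N base).
Qed.

Theorem lemma4p4 (k N : nat) (hk : 0 < k) (hN : 0 < N) :
  [|| (5 <= k) && (3 <= N), (4 <= k) && (4 <= N) | (3 <= k) && (9 <= N)] ->
  k ^ N <= 'C(N * k - N - 1, N).
Proof.
by case/or3P=> /andP[le_k le_N]; apply: bound_mono le_k _ le_N _.
Qed.
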